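(* Let $n\in\mathbb{N}$, $\alpha\in\mathbb{R}$ with $n<\alpha\le n+1$, $k\in\mathbb{N}$, $\mu\in\mathbb{R}$ with $\mu>-1$, and consider the differential operator in the Laplace variable $s$ $$\Pi^{n+1}_{k,\mu,\alpha}=\frac{1}{s^{2\alpha+k+\mu+3}}\cdot\frac{d}{ds}\cdot s^{2\alpha-n+1+k}\cdot\frac{d^{n+k+1}}{ds^{n+k+1}}\cdot s^{n+1}.$$ Then $\Pi^{n+1}_{k,\mu,\alpha}$ is an integral-annihilator for $x^{(\alpha)}(t_0)$ via the truncated fractional Taylor expansion $$x_{2\alpha-n}(t_0+t)=\sum_{j=0}^{n}\frac{t^j}{j!}x^{(j)}(t_0)+\frac{t^{\alpha}}{\Gamma(\alpha+1)}x^{(\alpha)}(t_0)+\frac{t^{2\alpha-n}}{\Gamma(2\alpha-n+1)}x^{(2\alpha-n)}(t_0),\quad t\ge0,$$ that is: (i) writing $\hat x_{2\alpha-n}(s)=\sum_{j=0}^n s^{-(j+1)}x^{(j)}(t_0)+s^{-(\alpha+1)}x^{(\alpha)}(t_0)+s^{-(2\alpha-n+1)}x^{(2\alpha-n)}(t_0)$ for its Laplace transform (in $t$), the terms involving $x^{(j)}(t_0)$, $0\le j\le n$, and $x^{(2\alpha-n)}(t_0)$ are annihilated, and for every $T>0$ $$(-1)^{n+1+k}\,\mathcal{L}^{-1}\{\Pi^{n+1}_{k,\mu,\alpha}\hat x_{2\alpha-n}\}(T)=\frac{\Gamma(\alpha+1+k)}{\Gamma(\alpha-n)}\,\frac{(\alpha-n)\,T^{n+\alpha+3+k+\mu}}{\Gamma(n+\alpha+k+\mu+4)}\,x^{(\alpha)}(t_0);$$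 (ii) after expansion by the Leibniz rule, $\Pi^{n+1}_{k,\mu,\alpha}$ is a finite linear combination of operators $s^{-\nu}\frac{d^m}{ds^m}$ with $\nu\ge\mu+1>0$, so that its action on a Laplace transform corresponds in the time domain to a Riemann–Liouville integral.
   Context: $\mathcal{L}^{-1}$ denotes the inverse Laplace transform. Here $x^{(j)}(t_0)$, $x^{(\alpha)}(t_0)$, $x^{(2\alpha-n)}(t_0)$ are arbitrary real coefficients (in the application, derivative values of a signal $x\in\mathcal{C}^n(I)$ at $t_0$, the fractional ones being Jumarie modified Riemann–Liouville derivatives $x^{(\beta)}=(x^{(n)})^{(\beta-n)}$). The time-domain meaning of $s^{-\nu}\frac{d^m}{ds^m}\hat g(s)$, $\nu>0$, is $T\mapsto\frac{1}{\Gamma(\nu)}\int_0^T(T-\tau)^{\nu-1}(-\tau)^m g(\tau)\,d\tau$. *)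

From Stdlib Require Import Reals List.
From Coquelicot Require Import Coquelicot.
Open Scope R_scope.

Definition Gamma (x : R) : R :=
  RInt_gen (fun t => Rpower t (x - 1) * exp (- t))
           (at_right 0) (Rbar_locally p_infty).

Definition is_laplace (g : R -> R) (s F : R) : Prop :=
  is_RInt_gen (fun t => exp (- (s * t)) * g t)
              (at_right 0) (Rbar_locally p_infty) F.

Definition Pi_op (n k : nat) (mu alpha : R) (f : R -> R) (s : R) : R :=
  / Rpower s (2 * alpha + INR k + mu + 3) *
  Derive (fun u => Rpower u (2 * alpha - INR n + 1 + INR k) *
                   Derive_n (fun v => v ^ (n + 1) * f v) (n + k + 1) u) s.

(* Laplace transform (in t) of the truncated fractional Taylor expansion
   x_{2alpha-n}(t0+t), with coefficients c j = x^(j)(t0), xa = x^(alpha)(t0),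
   xb = x^(2alpha-n)(t0). *)
Definition xhat (n : nat) (alpha : R) (c : nat -> R) (xa xb : R) (s : R) : R :=
  sum_f_R0 (fun j => Rpower s (- (INR j + 1)) * c j) n
  + Rpower s (- (alpha + 1)) * xa
  + Rpower s (- (2 * alpha - INR n + 1)) * xb.

Definition lin_comb (L : list (R * R * nat)) (f : R -> R) (s : R) : R :=
  fold_right (fun '(c, nu, m) acc => c * Rpower s (- nu) * Derive_n f m s + acc) 0 L.

(* On monomials the operator acts diagonally: [Pi s^p] is a constant times
   [s^(p - n - k - mu - 3)].  The factor [s^(n+1)] followed by [n+k+1] derivatives
   produces the falling factorial [(p+n+1)(p+n)...(p-k+1)], which vanishes for
   [p = -(j+1)], [j <= n]; the outer [d/ds] after multiplication by [s^(2alpha-n+1+k)]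
   produces the factor [p + 2alpha - n + 1], which vanishes for [p = -(2alpha-n+1)].
   For [p = -(alpha+1)] the falling factorial is, up to the sign [(-1)^(n+k+1)],
   the rising factorial of [alpha - n], i.e. [Gamma(alpha+1+k) / Gamma(alpha-n)], and
   [s^(-nu)] is the Laplace transform of [T^(nu-1) / Gamma nu]; the Gamma integral is
   obtained as the limit of its monotone, bounded partial integrals.
   Part (ii) is the Leibniz rule: differentiating a term [c s^(-nu) f^(m)] yields
   terms with [nu + m] raised by one, so the final terms satisfy
   [nu + m = n + k + mu + 3] with [m <= n + k + 2]. *)
From Stdlib Require Import Reals List Lra Lia Classical.
From Coquelicot Require Import Coquelicot.
Open Scope R_scope.

Lemma locally_pos (s : R) : 0 < s -> locally s (fun u => 0 < u).
Proof. exact (open_gt 0 s). Qed.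

Lemma is_derive_Rpower (p u : R) : 0 < u ->
  is_derive (fun x => Rpower x p) u (p * Rpower u (p - 1)).
Proof. intros Hu. apply is_derive_Reals. now apply derivable_pt_lim_power. Qed.

Lemma Pi_op_ext n k mu alpha (f g : R -> R) (s : R) : 0 < s ->
  (forall u, 0 < u -> f u = g u) -> Pi_op n k mu alpha f s = Pi_op n k mu alpha g s.
Proof.
  intros Hs Hfg. unfold Pi_op. f_equal. apply Derive_ext_loc.
  apply (filter_imp (fun u => 0 < u)); [|now apply locally_pos].
  intros u Hu. f_equal. apply Derive_n_ext_loc.
  apply (filter_imp (fun u => 0 < u)); [|now apply locally_pos].
  intros v Hv. now rewrite Hfg.
Qed.

Fixpoint falling (b : R) (m : nat) : R :=
  match m with O => 1 | S m => falling b m * (b - INR m) end.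

Fixpoint rising (y : R) (m : nat) : R :=
  match m with O => 1 | S m => rising y m * (y + INR m) end.

Lemma falling_INR_lt (i m : nat) : (i < m)%nat -> falling (INR i) m = 0.
Proof.
  induction m as [|m IH]; intros Him; [lia|]. simpl.
  destruct (Nat.eq_dec i m) as [->|Hne]; [ring|]. rewrite IH by lia. ring.
Qed.

Lemma falling_opp (y : R) (m : nat) : falling (- y) m = (-1) ^ m * rising y m.
Proof. induction m as [|m IH]; simpl; [ring|]. rewrite IH; ring. Qed.

Definition psum (l : list (R * R)) (u : R) : R :=
  fold_right (fun '(c, p) acc => c * Rpower u p + acc) 0 l.

Lemma psum_app (l1 l2 : list (R * R)) (u : R) :
  psum (l1 ++ l2) u = psum l1 u + psum l2 u.
Proof. induction l1 as [|[c p] l IH]; simpl; [ring|]. rewrite IH; ring. Qed.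

Lemma psum_coef0 (l : list (R * R)) (u : R) :
  (forall c p, In (c, p) l -> c = 0) -> psum l u = 0.
Proof.
  induction l as [|[c p] l IH]; intros H0; simpl; [ring|].
  rewrite (H0 c p), IH; [ring| |now left].
  intros c' p' Hin. apply (H0 c' p'). now right.
Qed.

Lemma Rpower_mult_psum (a : R) (l : list (R * R)) (u : R) :
  Rpower u a * psum l u = psum (map (fun '(c, p) => (c, p + a)) l) u.
Proof.
  induction l as [|[c p] l IH]; simpl; [ring|].
  rewrite <- IH, Rpower_plus. ring.
Qed.

Lemma is_derive_psum (l : list (R * R)) (u : R) : 0 < u ->
  is_derive (psum l) u (psum (map (fun '(c, p) => (c * p, p - 1)) l) u).
Proof.
  intros Hu. induction l as [|[c p] l IH]; simpl.
  - apply (is_derive_const 0).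
  - apply (is_derive_plus (fun x => c * Rpower x p) (psum l)); [|exact IH].
    rewrite Rmult_assoc. apply is_derive_scal. now apply is_derive_Rpower.
Qed.

Lemma Derive_n_psum (l : list (R * R)) (m : nat) (u : R) : 0 < u ->
  Derive_n (psum l) m u = psum (map (fun '(c, p) => (c * falling p m, p - INR m)) l) u.
Proof.
  revert u. induction m as [|m IH]; intros u Hu.
  - simpl. f_equal. rewrite <- (map_id l) at 1.
    apply map_ext. intros [c p]. f_equal; ring.
  - simpl. rewrite (Derive_ext_loc _ (psum (map (fun '(c, p) => (c * falling p m, p - INR m)) l))).
    + rewrite (is_derive_unique _ _ _ (is_derive_psum _ _ Hu)), map_map.
      f_equal. apply map_ext. intros [c p]. f_equal; [ring|]. destruct m; simpl; ring.
    + apply (filter_imp (fun u => 0 < u)); [|now apply locally_pos].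
      intros; now apply IH.
Qed.
Definition Pi_multiplier (n k : nat) (alpha p : R) : R :=
  falling (p + INR (n + 1)) (n + k + 1) * (p + 2 * alpha - INR n + 1).

Lemma Pi_op_psum n k mu alpha (l : list (R * R)) (s : R) : 0 < s ->
  Pi_op n k mu alpha (psum l) s =
  psum (map (fun '(c, p) => (c * Pi_multiplier n k alpha p,
                             p - (INR n + INR k + mu + 3))) l) s.
Proof.
  intros Hs. unfold Pi_op.
  set (e := 2 * alpha - INR n + 1 + INR k).
  set (l1 := map (fun '(c, p) => (c * falling p (n + k + 1), p - INR (n + k + 1)))
                 (map (fun '(c, p) => (c, p + INR (n + 1))) l)).
  rewrite (Derive_ext_loc _ (psum (map (fun '(c, p) => (c, p + e)) l1))).
  - rewrite (is_derive_unique _ _ _ (is_derive_psum _ _ Hs)).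
    rewrite <- Rpower_Ropp, Rpower_mult_psum. f_equal.
    unfold l1. rewrite !map_map. apply map_ext. intros [c p].
    unfold Pi_multiplier, e. rewrite !plus_INR. simpl. f_equal; ring.
  - apply (filter_imp (fun u => 0 < u)); [|now apply locally_pos]. intros u Hu.
    rewrite <- Rpower_mult_psum. f_equal.
    rewrite (Derive_n_ext_loc _ (psum (map (fun '(c, p) => (c, p + INR (n + 1))) l))).
    + now apply Derive_n_psum.
    + apply (filter_imp (fun u => 0 < u)); [|now apply locally_pos]. intros v Hv.
      now rewrite <- Rpower_mult_psum, Rpower_pow.
Qed.

Lemma Pi_op_Rpower n k mu alpha (p s : R) : 0 < s ->
  Pi_op n k mu alpha (fun u => Rpower u p) s =
  Pi_multiplier n k alpha p * Rpower s (p - (INR n + INR k + mu + 3)).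
Proof.
  intros Hs. rewrite (Pi_op_ext _ _ _ _ _ (psum ((1, p) :: nil)) _ Hs).
  - rewrite Pi_op_psum by exact Hs. simpl. ring.
  - intros u _. simpl. ring.
Qed.

Lemma Pi_multiplier_int n k alpha (j : nat) : (j <= n)%nat ->
  Pi_multiplier n k alpha (- (INR j + 1)) = 0.
Proof.
  intros Hj. unfold Pi_multiplier.
  replace (- (INR j + 1) + INR (n + 1)) with (INR (n - j))
    by (rewrite minus_INR, plus_INR by exact Hj; simpl; ring).
  rewrite falling_INR_lt by lia. ring.
Qed.

Lemma Pi_multiplier_double n k alpha :
  Pi_multiplier n k alpha (- (2 * alpha - INR n + 1)) = 0.
Proof. unfold Pi_multiplier. ring. Qed.

Lemma Pi_multiplier_alpha n k alpha :
  Pi_multiplier n k alpha (- (alpha + 1)) =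
  (-1) ^ (n + k + 1) * rising (alpha - INR n) (n + k + 1) * (alpha - INR n).
Proof.
  unfold Pi_multiplier. rewrite <- falling_opp, plus_INR. simpl.
  replace (- (alpha + 1) + (INR n + 1)) with (- (alpha - INR n)) by ring. ring.
Qed.

Lemma xhat_psum n alpha (c : nat -> R) (xa xb u : R) :
  xhat n alpha c xa xb u =
  psum (map (fun j => (c j, - (INR j + 1))) (seq 0 (S n))
        ++ (xa, - (alpha + 1)) :: (xb, - (2 * alpha - INR n + 1)) :: nil) u.
Proof.
  assert (Hsum : forall m, sum_f_R0 (fun j => Rpower u (- (INR j + 1)) * c j) m =
                           psum (map (fun j => (c j, - (INR j + 1))) (seq 0 (S m))) u).
  { induction m as [|m IH]; [simpl; ring|].
    rewrite seq_S, map_app, psum_app, <- IH. simpl. ring. }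
  unfold xhat. rewrite psum_app, Hsum. simpl. ring.
Qed.

Lemma Pi_op_xhat n k mu alpha (c : nat -> R) (xa xb s : R) : 0 < s ->
  Pi_op n k mu alpha (xhat n alpha c xa xb) s =
  Pi_multiplier n k alpha (- (alpha + 1)) * xa *
  Rpower s (- (INR n + alpha + INR k + mu + 4)).
Proof.
  intros Hs. rewrite (Pi_op_ext _ _ _ _ _ _ _ Hs (fun u _ => xhat_psum n alpha c xa xb u)).
  rewrite Pi_op_psum, map_app, psum_app by exact Hs.
  rewrite psum_coef0.
  - simpl. rewrite Pi_multiplier_double.
    replace (- (alpha + 1) - (INR n + INR k + mu + 3))
      with (- (INR n + alpha + INR k + mu + 4)) by ring. ring.
  - intros c' p' Hin. rewrite map_map, in_map_iff in Hin.
    destruct Hin as [j [Hj Hseq]]. injection Hj as <- _.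
    rewrite in_seq in Hseq. rewrite Pi_multiplier_int by lia. ring.
Qed.

Section LinComb.

Variable f : R -> R.
Hypothesis f_smooth : forall (m : nat) (u : R), 0 < u -> ex_derive_n f m u.

Definition lc_deriv (L : list (R * R * nat)) : list (R * R * nat) :=
  flat_map (fun '(c, nu, m) => (- (c * nu), nu + 1, m) :: (c, nu, S m) :: nil) L.

Definition lc_mulpow (a : R) (L : list (R * R * nat)) : list (R * R * nat) :=
  map (fun '(c, nu, m) => (c, nu - a, m)) L.

Lemma Rpower_mult_lin_comb (a : R) (L : list (R * R * nat)) (u : R) :
  Rpower u a * lin_comb L f u = lin_comb (lc_mulpow a L) f u.
Proof.
  induction L as [|[[c nu] m] L IH]; simpl; [ring|].
  rewrite <- IH. replace (- (nu - a)) with (a + - nu) by ring.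
  rewrite Rpower_plus. ring.
Qed.

Lemma is_derive_lin_comb (L : list (R * R * nat)) (u : R) : 0 < u ->
  is_derive (lin_comb L f) u (lin_comb (lc_deriv L) f u).
Proof.
  intros Hu. induction L as [|[[c nu] m] L IH]; simpl.
  - apply (is_derive_const 0).
  - rewrite <- Rplus_assoc.
    apply (is_derive_plus (fun x => c * Rpower x (- nu) * Derive_n f m x) (lin_comb L f));
      [|exact IH].
    replace (- (c * nu) * Rpower u (- (nu + 1)) * Derive_n f m u +
             c * Rpower u (- nu) * Derive (Derive_n f m) u)
      with (c * ((- nu * Rpower u (- nu - 1)) * Derive_n f m u +
                 Rpower u (- nu) * Derive (Derive_n f m) u))
      by (replace (- nu - 1) with (- (nu + 1)) by ring; ring).
    apply (is_derive_ext (fun x => c * (Rpower x (- nu) * Derive_n f m x)));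
      [intros; symmetry; apply Rmult_assoc|].
    apply is_derive_scal, (is_derive_mult (fun x => Rpower x (- nu)) (Derive_n f m)).
    + now apply is_derive_Rpower.
    + apply Derive_correct, (f_smooth (S m) u Hu).
    + intros; apply Rmult_comm.
Qed.

Lemma Derive_n_lin_comb (L : list (R * R * nat)) (m : nat) (u : R) : 0 < u ->
  Derive_n (lin_comb L f) m u = lin_comb (Nat.iter m lc_deriv L) f u.
Proof.
  revert u. induction m as [|m IH]; intros u Hu; [reflexivity|].
  simpl. rewrite (Derive_ext_loc _ (lin_comb (Nat.iter m lc_deriv L) f)).
  - apply is_derive_unique. now apply is_derive_lin_comb.
  - apply (filter_imp (fun u => 0 < u)); [|now apply locally_pos]. intros; now apply IH.
Qed.

End LinComb.

Definition Pi_terms (n k : nat) (mu alpha : R) : list (R * R * nat) :=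
  lc_mulpow (- (2 * alpha + INR k + mu + 3))
    (lc_deriv (lc_mulpow (2 * alpha - INR n + 1 + INR k)
      (Nat.iter (n + k + 1) lc_deriv ((1, - INR (n + 1), O) :: nil)))).

Lemma Pi_op_lin_comb n k mu alpha (f : R -> R) :
  (forall (m : nat) (u : R), 0 < u -> ex_derive_n f m u) ->
  forall s : R, 0 < s -> Pi_op n k mu alpha f s = lin_comb (Pi_terms n k mu alpha) f s.
Proof.
  intros Hf s Hs. unfold Pi_op, Pi_terms.
  rewrite (Derive_ext_loc _ (lin_comb (lc_mulpow (2 * alpha - INR n + 1 + INR k)
      (Nat.iter (n + k + 1) lc_deriv ((1, - INR (n + 1), O) :: nil))) f)).
  - rewrite (is_derive_unique _ _ _ (is_derive_lin_comb _ Hf _ _ Hs)).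
    now rewrite <- Rpower_Ropp, Rpower_mult_lin_comb.
  - apply (filter_imp (fun u => 0 < u)); [|now apply locally_pos]. intros u Hu.
    rewrite <- Rpower_mult_lin_comb. f_equal.
    rewrite (Derive_n_ext_loc _ (lin_comb ((1, - INR (n + 1), O) :: nil) f)).
    + now apply Derive_n_lin_comb.
    + apply (filter_imp (fun u => 0 < u)); [|now apply locally_pos]. intros v Hv.
      simpl. rewrite Ropp_involutive, Rpower_pow by exact Hv. ring.
Qed.

Definition graded (N : R) (j : nat) (L : list (R * R * nat)) : Prop :=
  forall c nu m, In (c, nu, m) L -> nu + INR m = N /\ (m <= j)%nat.

Lemma graded_lc_deriv N j L : graded N j L -> graded (N + 1) (S j) (lc_deriv L).
Proof.
  intros HL c nu m Hin. unfold lc_deriv in Hin. rewrite in_flat_map in Hin.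
  destruct Hin as [[[c0 nu0] m0] [Hin0 Hin]]. destruct (HL c0 nu0 m0 Hin0) as [HN Hj].
  destruct Hin as [Ht|[Ht|[]]]; injection Ht as <- <- <-; split; try lia.
  - rewrite <- HN. ring.
  - rewrite S_INR, <- HN. ring.
Qed.

Lemma graded_iter_lc_deriv N j L (m : nat) :
  graded N j L -> graded (N + INR m) (j + m) (Nat.iter m lc_deriv L).
Proof.
  induction m as [|m IH]; intros HL; cbn [Nat.iter].
  - rewrite Rplus_0_r, Nat.add_0_r. exact HL.
  - rewrite S_INR, Nat.add_succ_r, <- Rplus_assoc. now apply graded_lc_deriv, IH.
Qed.

Lemma graded_lc_mulpow N j L (a : R) : graded N j L -> graded (N - a) j (lc_mulpow a L).
Proof.
  intros HL c nu m Hin. unfold lc_mulpow in Hin. rewrite in_map_iff in Hin.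
  destruct Hin as [[[c0 nu0] m0] [Ht Hin0]]. injection Ht as <- <- <-.
  destruct (HL c0 nu0 m0 Hin0) as [HN Hj]. split; [rewrite <- HN; ring|exact Hj].
Qed.

Lemma Pi_terms_orders n k mu alpha c nu m :
  In (c, nu, m) (Pi_terms n k mu alpha) -> mu + 1 <= nu.
Proof.
  intros Hin.
  assert (Hgr : graded (INR n + INR k + mu + 3) (n + k + 2) (Pi_terms n k mu alpha)).
  { unfold Pi_terms.
    replace (INR n + INR k + mu + 3) with
      (- INR (n + 1) + INR (n + k + 1) - (2 * alpha - INR n + 1 + INR k) + 1
       - - (2 * alpha + INR k + mu + 3)) by (rewrite !plus_INR; simpl; ring).
    replace (n + k + 2)%nat with (S (0 + (n + k + 1))) by lia.
    apply graded_lc_mulpow, graded_lc_deriv, graded_lc_mulpow, graded_iter_lc_deriv.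
    intros c0 nu0 m0 [Ht|[]]. injection Ht as <- <- <-. simpl. split; [ring|lia]. }
  destruct (Hgr c nu m Hin) as [HN Hj].
  apply le_INR in Hj. rewrite !plus_INR in Hj. simpl in Hj. lra.
Qed.

Lemma Rpower_pos (t c : R) : 0 < Rpower t c.
Proof. apply exp_pos. Qed.

Lemma exp_le (x y : R) : x <= y -> exp x <= exp y.
Proof. intros [H| ->]; [left; now apply exp_increasing|right; reflexivity]. Qed.

Lemma continuous_Rpower (p t : R) : 0 < t -> continuous (fun y => Rpower y p) t.
Proof.
  intros Ht. apply (ex_derive_continuous (K := R_AbsRing) (V := R_NormedModule)).
  eexists. now apply is_derive_Rpower.
Qed.

Lemma nondecreasing_lim_pinfty (F : R -> R) (a B : R) :
  (forall x y, a <= x <= y -> F x <= F y) -> (forall x, a <= x -> F x <= B) ->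
  exists l, filterlim F (Rbar_locally p_infty) (locally l) /\ (forall x, a <= x -> F x <= l).
Proof.
  intros Hmono Hbound.
  destruct (completeness (fun y => exists x, a <= x /\ y = F x)) as [l [Hub Hlub]].
  - exists B. intros y [x [Hx ->]]. now apply Hbound.
  - exists (F a), a. split; [lra|reflexivity].
  - assert (Hle : forall x, a <= x -> F x <= l) by (intros x Hx; apply Hub; now exists x).
    exists l. split; [|exact Hle].
    apply filterlim_locally. intros eps.
    assert (Hnear : exists x0, a <= x0 /\ l - eps < F x0).
    { apply NNPP. intros Hfar. assert (l <= l - eps); [|destruct eps; simpl in *; lra].
      apply Hlub. intros y [x [Hx ->]]. apply Rnot_lt_le. intros Hlt. apply Hfar. now exists x. }
    destruct Hnear as [x0 [Hx0 Hl]]. exists x0. intros x Hx.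
    assert (F x0 <= F x) by (apply Hmono; lra). assert (F x <= l) by (apply Hle; lra).
    change (Rabs (F x - l) < eps). apply Rabs_def1; lra.
Qed.

(* Reduced to the previous lemma through [y = 1/x] and a sign change. *)
Lemma nondecreasing_lim_at_right0 (F : R -> R) (B : R) :
  (forall x y, 0 < x <= y -> y <= 1 -> F x <= F y) -> (forall x, 0 < x <= 1 -> B <= F x) ->
  exists l, filterlim F (at_right 0) (locally l) /\ (forall x, 0 < x <= 1 -> l <= F x).
Proof.
  intros Hmono Hbound.
  assert (Hinv : forall y, 1 <= y -> 0 < / y <= 1).
  { intros y Hy. split; [apply Rinv_0_lt_compat; lra|].
    rewrite <- Rinv_1. apply Rinv_le_contravar; lra. }
  destruct (nondecreasing_lim_pinfty (fun y => - F (/ y)) 1 (- B)) as [l [Hl Hle]].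
  - intros x y Hxy. apply Ropp_le_contravar, Hmono; [|apply Hinv; lra].
    split; [apply Hinv; lra|]. apply Rinv_le_contravar; lra.
  - intros x Hx. apply Ropp_le_contravar, Hbound, Hinv, Hx.
  - exists (- l). split.
    + apply (filterlim_ext_loc (fun x => - (- F (/ / x)))).
      * unfold at_right, within. apply filter_forall. intros x Hx.
        rewrite Rinv_inv. ring.
      * apply (filterlim_comp _ _ _ (fun x => - F (/ / x)) Ropp _ (locally l)).
        -- exact (filterlim_comp _ _ _ Rinv _ _ _ _ filterlim_Rinv_0_right Hl).
        -- exact (filterlim_opp (V := R_NormedModule) l).
    + intros x Hx. assert (Hx' := Hle (/ x)).
      rewrite Rinv_inv in Hx'. enough (1 <= / x) by (specialize (Hx' H); lra).
      rewrite <- Rinv_1. apply Rinv_le_contravar; lra.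
Qed.

Lemma is_RInt_gen_antiderivative (F h : R -> R) (la lb : R) :
  (forall t, 0 < t -> is_derive F t (h t)) -> (forall t, 0 < t -> continuous h t) ->
  filterlim F (at_right 0) (locally la) -> filterlim F (Rbar_locally p_infty) (locally lb) ->
  is_RInt_gen h (at_right 0) (Rbar_locally p_infty) (lb - la).
Proof.
  intros Hder Hcont H0 Hinf.
  assert (Hpos : filter_prod (at_right 0) (Rbar_locally p_infty)
    (fun ab : R * R => forall x, Rmin (fst ab) (snd ab) <= x <= Rmax (fst ab) (snd ab) -> 0 < x)).
  { apply (Filter_prod _ _ _ (fun a => 0 < a) (fun b => 0 < b)).
    - unfold at_right, within. apply filter_forall. auto.
    - exists 0. auto.
    - intros a b Ha Hb t Ht. simpl in Ht.
      assert (0 < Rmin a b) by (apply Rmin_glb_lt; auto). lra. }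
  apply (is_RInt_gen_ext (Derive F)).
  - eapply filter_imp; [|exact Hpos]. intros [a b] Hab t Ht. simpl in *.
    apply is_derive_unique, Hder, Hab. lra.
  - apply is_RInt_gen_Derive; [| |exact H0|exact Hinf].
    + eapply filter_imp; [|exact Hpos]. intros [a b] Hab t Ht.
      eexists. apply Hder, (Hab t Ht).
    + eapply filter_imp; [|exact Hpos]. intros [a b] Hab t Ht.
      apply (continuous_ext_loc _ h); [|apply Hcont, (Hab t Ht)].
      apply (filter_imp (fun u => 0 < u)); [|apply locally_pos, (Hab t Ht)].
      intros y Hy. symmetry. apply is_derive_unique, Hder, Hy.
Qed.

Lemma Rpower_exp_bound (c : R) : exists M, 0 < M /\ forall t, 1 <= t ->
  Rpower t c * exp (- t) <= M * exp (- t / 2).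
Proof.
  set (d := Rabs c + 1).
  assert (Hd : 0 < d) by (unfold d; pose proof (Rabs_pos c); lra).
  assert (Hcd : c < d) by (unfold d; pose proof (Rle_abs c); lra).
  exists (exp (d * ln (2 * d) - d)). split; [apply exp_pos|].
  intros t Ht. unfold Rpower. rewrite <- !exp_plus. apply exp_le.
  assert (Hl : 0 <= ln t) by (rewrite <- ln_1; apply ln_le; lra).
  assert (H1 : 1 + ln (t / (2 * d)) <= t / (2 * d)).
  { rewrite <- (exp_ln (t / (2 * d))) at 2 by (apply Rdiv_lt_0_compat; lra).
    apply exp_ineq1_le. }
  rewrite ln_div in H1 by lra.
  assert (H2 : d * (1 + (ln t - ln (2 * d))) <= d * (t / (2 * d)))
    by (apply Rmult_le_compat_l; lra).
  replace (d * (t / (2 * d))) with (t / 2) in H2 by (field; lra).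
  assert (H3 : c * ln t <= d * ln t) by (apply Rmult_le_compat_r; lra).
  lra.
Qed.

Lemma Rpower_exp_lim_pinfty (x : R) :
  filterlim (fun t => Rpower t x * exp (- t)) (Rbar_locally p_infty) (locally 0).
Proof.
  destruct (Rpower_exp_bound x) as [M [HM Hbound]].
  apply filterlim_locally. intros eps.
  assert (He : 0 < eps / M) by (apply Rdiv_lt_0_compat; [destruct eps|]; auto).
  exists (Rmax 1 (- 2 * ln (eps / M))). intros t Ht.
  pose proof (Rmax_l 1 (- 2 * ln (eps / M))). pose proof (Rmax_r 1 (- 2 * ln (eps / M))).
  change (Rabs (Rpower t x * exp (- t) - 0) < eps). rewrite Rminus_0_r.
  assert (H1 : Rpower t x * exp (- t) <= M * exp (- t / 2)) by (apply Hbound; lra).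
  assert (H2 : exp (- t / 2) < eps / M).
  { rewrite <- (exp_ln (eps / M)) by exact He. apply exp_increasing. lra. }
  pose proof (Rpower_pos t x). pose proof (exp_pos (- t)).
  rewrite Rabs_right by nra.
  assert (M * exp (- t / 2) < M * (eps / M)) by (apply Rmult_lt_compat_l; auto).
  replace (M * (eps / M)) with (pos eps) in * by (field; lra). lra.
Qed.

Lemma Rpower_exp_lim_at_right0 (x : R) : 0 < x ->
  filterlim (fun t => Rpower t x * exp (- t)) (at_right 0) (locally 0).
Proof.
  intros Hx. apply filterlim_locally. intros eps.
  exists (mkposreal _ (Rpower_pos eps (/ x))). intros t Ht Htpos.
  change (Rabs (t - 0) < Rpower eps (/ x)) in Ht.
  rewrite Rminus_0_r, Rabs_right in Ht by lra.
  change (Rabs (Rpower t x * exp (- t) - 0) < eps). rewrite Rminus_0_r.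
  assert (H1 : Rpower t x < eps).
  { replace (pos eps) with (Rpower (Rpower eps (/ x)) x).
    - apply Rlt_Rpower_l; lra.
    - rewrite Rpower_mult, Rinv_l by lra. apply Rpower_1. destruct eps; auto. }
  assert (H2 : exp (- t) <= 1) by (rewrite <- exp_0; apply exp_le; lra).
  pose proof (Rpower_pos t x). pose proof (exp_pos (- t)).
  rewrite Rabs_right by nra. nra.
Qed.

Section GammaIntegral.

Variable x : R.

Let g (t : R) : R := Rpower t (x - 1) * exp (- t).

Lemma gamma_integrand_pos (t : R) : 0 < g t.
Proof. apply Rmult_lt_0_compat; [apply Rpower_pos|apply exp_pos]. Qed.

Lemma is_derive_Rpower_exp (t : R) : 0 < t ->
  is_derive (fun t => Rpower t x * exp (- t)) t (x * g t - Rpower t x * exp (- t)).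
Proof.
  intros Ht. unfold g.
  replace (x * (Rpower t (x - 1) * exp (- t)) - Rpower t x * exp (- t))
    with (x * Rpower t (x - 1) * exp (- t) + Rpower t x * (- exp (- t))) by ring.
  apply (is_derive_mult (fun t => Rpower t x) (fun t => exp (- t))).
  - now apply is_derive_Rpower.
  - auto_derive; [exact I|ring].
  - intros; apply Rmult_comm.
Qed.

Lemma gamma_integrand_continuous (t : R) : 0 < t -> continuous g t.
Proof.
  intros Ht. apply (ex_derive_continuous (K := R_AbsRing) (V := R_NormedModule)).
  apply ex_derive_mult; [eexists; now apply is_derive_Rpower|auto_derive; exact I].
Qed.

Lemma ex_RInt_gamma_integrand (a b : R) : 0 < a -> 0 < b -> ex_RInt g a b.
Proof.
  intros Ha Hb. apply (ex_RInt_continuous (V := R_CompleteNormedModule)).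
  intros z Hz. apply gamma_integrand_continuous.
  assert (0 < Rmin a b) by (apply Rmin_glb_lt; auto). lra.
Qed.

Let G (u : R) : R := RInt g 1 u.

Lemma is_derive_partial_Gamma (u : R) : 0 < u -> is_derive G u (g u).
Proof.
  intros Hu. apply (is_derive_RInt (V := R_CompleteNormedModule) _ _ 1);
    [|now apply gamma_integrand_continuous].
  apply (filter_imp (fun u => 0 < u)); [|now apply locally_pos].
  intros b Hb. apply (RInt_correct (V := R_CompleteNormedModule)), ex_RInt_gamma_integrand; lra.
Qed.

Lemma partial_Gamma_le (a b : R) : 0 < a <= b -> G a <= G b.
Proof.
  intros Hab. unfold G.
  rewrite <- (RInt_Chasles (V := R_CompleteNormedModule) g 1 a b)
    by (apply ex_RInt_gamma_integrand; lra).
  assert (0 <= RInt g a b).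
  { apply RInt_ge_0; [lra|apply ex_RInt_gamma_integrand; lra|].
    intros; left; apply gamma_integrand_pos. }
  simpl. unfold plus; simpl. lra.
Qed.

Lemma partial_Gamma_upper : exists B, forall u, 1 <= u -> G u <= B.
Proof.
  destruct (Rpower_exp_bound (x - 1)) as [M [HM Hbound]].
  exists (2 * M * exp (- 1 / 2)). intros u Hu.
  assert (HI : is_RInt (fun t => M * exp (- t / 2)) 1 u
                 (minus (-2 * M * exp (- u / 2)) (-2 * M * exp (- 1 / 2)))).
  { apply (is_RInt_derive (V := R_CompleteNormedModule) (fun t => -2 * M * exp (- t / 2))).
    - intros t _. auto_derive; [exact I|]. unfold Rdiv; field.
    - intros t _. apply (ex_derive_continuous (K := R_AbsRing) (V := R_NormedModule)).
      auto_derive. exact I. }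
  unfold G. apply Rle_trans with (RInt (fun t => M * exp (- t / 2)) 1 u).
  - apply RInt_le; [exact Hu|apply ex_RInt_gamma_integrand; lra|eexists; exact HI|].
    intros t Ht. apply Hbound. lra.
  - rewrite (is_RInt_unique _ _ _ _ HI). unfold minus, plus, opp; simpl.
    pose proof (exp_pos (- u / 2)). nra.
Qed.

Hypothesis x_pos : 0 < x.

(* On [(0, 1]] the integrand is at most [t^(x-1)], whose integral is [1/x]. *)
Lemma partial_Gamma_lower (u : R) : 0 < u <= 1 -> - / x <= G u.
Proof.
  intros Hu.
  assert (Hmin : forall t, Rmin u 1 <= t -> 0 < t).
  { intros t Ht. assert (0 < Rmin u 1) by (apply Rmin_glb_lt; lra). lra. }
  assert (HI : is_RInt (fun t => Rpower t (x - 1)) u 1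
                 (minus (/ x * Rpower 1 x) (/ x * Rpower u x))).
  { apply (is_RInt_derive (V := R_CompleteNormedModule) (fun t => / x * Rpower t x)).
    - intros t [Ht _]. replace (Rpower t (x - 1)) with (/ x * (x * Rpower t (x - 1)))
        by (field; lra).
      apply is_derive_scal, is_derive_Rpower, Hmin, Ht.
    - intros t [Ht _]. apply continuous_Rpower, Hmin, Ht. }
  unfold G. rewrite <- (opp_RInt_swap (V := R_CompleteNormedModule))
    by (apply ex_RInt_gamma_integrand; lra).
  assert (Hle : RInt g u 1 <= RInt (fun t => Rpower t (x - 1)) u 1).
  { apply RInt_le; [lra|apply ex_RInt_gamma_integrand; lra|eexists; exact HI|].
    intros t Ht. unfold g. rewrite <- (Rmult_1_r (Rpower t (x - 1))) at 2.
    apply Rmult_le_compat_l; [left; apply Rpower_pos|].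
    rewrite <- exp_0. apply exp_le. lra. }
  rewrite (is_RInt_unique _ _ _ _ HI) in Hle. unfold minus, plus, opp in *; simpl in *.
  replace (Rpower 1 x) with 1 in Hle by (unfold Rpower; rewrite ln_1, Rmult_0_r, exp_0; reflexivity).
  pose proof (Rpower_pos u x). assert (0 < / x) by (apply Rinv_0_lt_compat; lra). nra.
Qed.

Lemma partial_Gamma_lims : exists L0 Linf,
  filterlim G (at_right 0) (locally L0) /\ filterlim G (Rbar_locally p_infty) (locally Linf) /\
  Gamma x = Linf - L0 /\ L0 < Linf.
Proof.
  destruct partial_Gamma_upper as [B HB].
  destruct (nondecreasing_lim_pinfty G 1 B) as [Linf [HLinf HGLinf]]; [|exact HB|].
  { intros a b Hab. apply partial_Gamma_le; lra. }
  destruct (nondecreasing_lim_at_right0 G (- / x)) as [L0 [HL0 HGL0]];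
    [|exact partial_Gamma_lower|].
  { intros a b Hab _. apply partial_Gamma_le; lra. }
  exists L0, Linf. do 2 (split; [assumption|]). split.
  - unfold Gamma. apply (is_RInt_gen_unique (V := R_CompleteNormedModule)).
    apply (is_RInt_gen_antiderivative G); [exact is_derive_partial_Gamma| |exact HL0|exact HLinf].
    exact gamma_integrand_continuous.
  - assert (HG1 : G 1 = 0) by exact (RInt_point (V := R_CompleteNormedModule) 1 g).
    assert (HG2 : 0 < G 2).
    { apply RInt_gt_0; [lra|intros; apply gamma_integrand_pos|].
      intros t Ht. apply gamma_integrand_continuous. lra. }
    specialize (HGL0 1). specialize (HGLinf 2). lra.
Qed.

Lemma is_RInt_gen_Gamma : is_RInt_gen g (at_right 0) (Rbar_locally p_infty) (Gamma x).
Proof.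
  destruct partial_Gamma_lims as [L0 [Linf [HL0 [HLinf [-> _]]]]].
  apply (is_RInt_gen_antiderivative G); [exact is_derive_partial_Gamma| |exact HL0|exact HLinf].
  exact gamma_integrand_continuous.
Qed.

Lemma Gamma_pos : 0 < Gamma x.
Proof. destruct partial_Gamma_lims as [L0 [Linf [_ [_ [-> HL]]]]]. lra. Qed.

Lemma filterlim_scal_at_right0 (s : R) : 0 < s ->
  filterlim (fun t => s * t) (at_right 0) (at_right 0).
Proof.
  intros Hs P [eps HP].
  exists (mkposreal _ (Rdiv_lt_0_compat _ _ (cond_pos eps) Hs)). intros t Ht Htpos.
  change (Rabs (t - 0) < eps / s) in Ht. rewrite Rminus_0_r, Rabs_right in Ht by lra.
  apply HP; [|nra]. change (Rabs (s * t - 0) < eps).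
  rewrite Rminus_0_r, Rabs_right by nra.
  apply Rmult_lt_compat_l with (r := s) in Ht; [|exact Hs].
  replace (s * (eps / s)) with (pos eps) in Ht by (field; lra). exact Ht.
Qed.

Lemma filterlim_scal_pinfty (s : R) : 0 < s ->
  filterlim (fun t => s * t) (Rbar_locally p_infty) (Rbar_locally p_infty).
Proof.
  intros Hs P [M HM]. exists (M / s). intros t Ht. apply HM.
  apply Rmult_lt_compat_l with (r := s) in Ht; [|exact Hs].
  replace (s * (M / s)) with M in Ht by (field; lra). exact Ht.
Qed.

(* The substitution [u = s t]: [t |-> s^(-x) G(s t)] is an antiderivative of the integrand. *)
Lemma is_laplace_Rpower (s : R) : 0 < s ->
  is_laplace (fun t => Rpower t (x - 1)) s (Gamma x * Rpower s (- x)).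
Proof.
  intros Hs. destruct partial_Gamma_lims as [L0 [Linf [HL0 [HLinf [-> _]]]]].
  replace ((Linf - L0) * Rpower s (- x))
    with (Rpower s (- x) * Linf - Rpower s (- x) * L0) by ring.
  unfold is_laplace.
  apply (is_RInt_gen_antiderivative (fun t => Rpower s (- x) * G (s * t))
           (fun t => exp (- (s * t)) * Rpower t (x - 1))).
  - intros t Ht.
    replace (exp (- (s * t)) * Rpower t (x - 1)) with (Rpower s (- x) * (s * g (s * t))).
    + apply is_derive_scal.
      apply (is_derive_comp G (fun t => s * t) t (g (s * t)) s).
      * apply is_derive_partial_Gamma. nra.
      * auto_derive; [exact I|ring].
    + unfold g. rewrite <- Rpower_mult_distr by assumption.
      rewrite <- (Rpower_1 s) at 2 by assumption.
      transitivity ((Rpower s (- x) * Rpower s 1 * Rpower s (x - 1))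
                    * (Rpower t (x - 1) * exp (- (s * t)))); [ring|].
      rewrite <- !Rpower_plus. replace (- x + 1 + (x - 1)) with 0 by ring.
      rewrite Rpower_O by assumption. ring.
  - intros t Ht. apply (ex_derive_continuous (K := R_AbsRing) (V := R_NormedModule)).
    apply ex_derive_mult; [auto_derive; exact I|eexists; now apply is_derive_Rpower].
  - eapply filterlim_comp;
      [|apply (filterlim_scal_r (K := R_AbsRing) (V := R_NormedModule) (Rpower s (- x)) L0)].
    eapply filterlim_comp; [apply filterlim_scal_at_right0, Hs|exact HL0].
  - eapply filterlim_comp;
      [|apply (filterlim_scal_r (K := R_AbsRing) (V := R_NormedModule) (Rpower s (- x)) Linf)].
    eapply filterlim_comp; [apply filterlim_scal_pinfty, Hs|exact HLinf].
Qed.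

End GammaIntegral.

Lemma Gamma_succ (x : R) : 0 < x -> Gamma (x + 1) = x * Gamma x.
Proof.
  intros Hx.
  assert (Hparts : is_RInt_gen
            (fun t => x * (Rpower t (x - 1) * exp (- t)) - Rpower t x * exp (- t))
            (at_right 0) (Rbar_locally p_infty) (0 - 0)).
  { apply (is_RInt_gen_antiderivative (fun t => Rpower t x * exp (- t))).
    - exact (is_derive_Rpower_exp x).
    - intros t Ht.
      apply (continuous_ext (fun t => minus (scal x (Rpower t (x - 1) * exp (- t)))
                                            (Rpower t (x + 1 - 1) * exp (- t)))).
      { intros y. unfold minus, plus, opp, scal; simpl. unfold mult; simpl.
        replace (x + 1 - 1) with x by ring. ring. }
      apply (continuous_minus (K := R_AbsRing) (V := R_NormedModule));
        [apply (continuous_scal_r (K := R_AbsRing) (V := R_NormedModule))|];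
        now apply gamma_integrand_continuous.
    - now apply Rpower_exp_lim_at_right0.
    - apply Rpower_exp_lim_pinfty. }
  assert (Hdiff := is_RInt_gen_minus _ _ _ _ (is_RInt_gen_scal _ x _ (is_RInt_gen_Gamma x Hx)) Hparts).
  unfold Gamma at 1. apply (is_RInt_gen_unique (V := R_CompleteNormedModule)).
  replace (x * Gamma x) with (minus (scal x (Gamma x)) (0 - 0))
    by (unfold minus, plus, opp, scal; simpl; unfold mult; simpl; ring).
  eapply is_RInt_gen_ext; [|exact Hdiff].
  apply filter_forall. intros ab t _. unfold minus, plus, opp, scal; simpl; unfold mult; simpl.
  replace (x + 1 - 1) with x by ring. ring.
Qed.

Lemma Gamma_add_nat (y : R) (m : nat) : 0 < y -> Gamma (y + INR m) = Gamma y * rising y m.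
Proof.
  intros Hy. induction m as [|m IH]; [simpl; rewrite Rplus_0_r; ring|].
  rewrite S_INR, <- Rplus_assoc, Gamma_succ, IH by (pose proof (pos_INR m); lra).
  simpl. ring.
Qed.

Lemma is_laplace_scal (g h : R -> R) (c s F : R) :
  (forall t, h t = c * g t) -> is_laplace g s F -> is_laplace h s (c * F).
Proof.
  intros Hh Hg. eapply is_RInt_gen_ext; [|exact (is_RInt_gen_scal _ c _ Hg)].
  apply filter_forall. intros ab t _. rewrite Hh. unfold scal; simpl; unfold mult; simpl. ring.
Qed.

Lemma is_laplace_Pi_op_xhat n k mu alpha (c : nat -> R) (xa xb s : R) :
  INR n < alpha -> -1 < mu -> 0 < s ->
  is_laplace
    (fun T => Gamma (alpha + 1 + INR k) / Gamma (alpha - INR n) *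
              ((alpha - INR n) * Rpower T (INR n + alpha + 3 + INR k + mu)
               / Gamma (INR n + alpha + INR k + mu + 4)) * xa)
    s ((-1) ^ (n + 1 + k) * Pi_op n k mu alpha (xhat n alpha c xa xb) s).
Proof.
  intros Halpha Hmu Hs. rewrite Pi_op_xhat, Pi_multiplier_alpha by exact Hs.
  set (y := alpha - INR n). set (X := INR n + alpha + INR k + mu + 4).
  assert (Hy : 0 < y) by (unfold y; lra).
  assert (HX : 0 < X) by (unfold X; pose proof (pos_INR n); pose proof (pos_INR k); lra).
  assert (HGamma : Gamma (alpha + 1 + INR k) = Gamma y * rising y (n + k + 1)).
  { rewrite <- Gamma_add_nat by exact Hy. f_equal. unfold y. rewrite !plus_INR. simpl. ring. }
  assert (Hsign : (-1) ^ (n + 1 + k) * (-1) ^ (n + k + 1) = 1).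
  { replace (n + 1 + k)%nat with (n + k + 1)%nat by lia.
    rewrite <- Rpow_mult_distr. replace (-1 * -1) with 1 by ring. apply pow1. }
  assert (HGy := Gamma_pos y Hy). assert (HGX := Gamma_pos X HX).
  replace (INR n + alpha + 3 + INR k + mu) with (X - 1) by (unfold X; ring).
  clearbody y X.
  replace ((-1) ^ (n + 1 + k) *
           ((-1) ^ (n + k + 1) * rising y (n + k + 1) * y * xa * Rpower s (- X)))
    with ((Gamma (alpha + 1 + INR k) / Gamma y * y / Gamma X * xa) * (Gamma X * Rpower s (- X))).
  - apply (is_laplace_scal (fun T => Rpower T (X - 1))); [|now apply is_laplace_Rpower].
    intros T. unfold Rdiv. ring.
  - rewrite HGamma.
    transitivity (((-1) ^ (n + 1 + k) * (-1) ^ (n + k + 1)) *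
                  (rising y (n + k + 1) * y * xa * Rpower s (- X))); [|ring].
    rewrite Hsign. field. lra.
Qed.

Theorem proposition2
  (n : nat) (alpha : R) (k : nat) (mu : R)
  (Halpha : INR n < alpha <= INR n + 1) (Hmu : -1 < mu) :
  (forall j : nat, (j <= n)%nat -> forall s : R, 0 < s ->
     Pi_op n k mu alpha (fun u => Rpower u (- (INR j + 1))) s = 0) /\
  (forall s : R, 0 < s ->
     Pi_op n k mu alpha (fun u => Rpower u (- (2 * alpha - INR n + 1))) s = 0) /\
  (forall (c : nat -> R) (xa xb : R) (s : R), 0 < s ->
     is_laplace
       (fun T => Gamma (alpha + 1 + INR k) / Gamma (alpha - INR n) *
                 ((alpha - INR n) * Rpower T (INR n + alpha + 3 + INR k + mu)
                  / Gamma (INR n + alpha + INR k + mu + 4)) * xa)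
       s
       ((-1) ^ (n + 1 + k) * Pi_op n k mu alpha (xhat n alpha c xa xb) s)) /\
  (exists L : list (R * R * nat),
     (forall c nu m, In (c, nu, m) L -> mu + 1 <= nu /\ 0 < nu) /\
     (forall f : R -> R,
        (forall (m : nat) (u : R), 0 < u -> ex_derive_n f m u) ->
        forall s : R, 0 < s -> Pi_op n k mu alpha f s = lin_comb L f s)).
Proof.
  split; [|split; [|split]].
  - intros j Hj s Hs. now rewrite Pi_op_Rpower, Pi_multiplier_int, Rmult_0_l.
  - intros s Hs. now rewrite Pi_op_Rpower, Pi_multiplier_double, Rmult_0_l.
  - intros c xa xb s Hs. apply is_laplace_Pi_op_xhat; lra.
  - exists (Pi_terms n k mu alpha). split.
    + intros c nu m Hin. pose proof (Pi_terms_orders _ _ _ _ _ _ _ Hin). lra.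
    + exact (Pi_op_lin_comb n k mu alpha).
Qed.
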